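(* Assume the model (M.2) and the sub-Gaussian condition (A.4) described in the context, and let Algorithm 2 be applied to $X_1,\ldots,X_N$. For $k\in\{1,\ldots,M_0+1\}$ let $E_{k,N}$ be the event that there exist integers $0\le n_1<n_2<n_3\le N_k$ such that $\{X^{(k)}_n:n=n_1+1,\ldots,n_2\}$ and $\{X^{(k)}_n:n=n_2+1,\ldots,n_3\}$ are two (consecutive) detected segments. Assume $f(N)\ge C\log N$, where $C>16D/c_0$ is a constant. Then $\Pr(\limsup_{N\to\infty}E_{k,N})=0$.
   Context: Model (M.2): for each sample size $N$ one observes independent random vectors $X_1,\ldots,X_N\in\mathbb{R}^D$ ($D\in\mathbb{N}$ fixed). There are $M_0\ge 0$ (fixed) change points $0=L_0<L_1<\cdots<L_{M_0}<L_{M_0+1}=N$ (depending on $N$), with segment sizes $N_k=L_k-L_{k-1}$, $N_k\to\infty$; for each $k$, $X_{L_{k-1}+1},\ldots,X_{L_k}$ are i.i.d. with distribution $\mathcal{G}_k$ with mean $\mu_k$ and finite covariance; $\mu_k\neq\mu_{k+1}$. Write $X^{(k)}_n=X_{L_{k-1}+n}$, $n=1,\ldots,N_k$. (A.4): there is $c_0>0$ such that for every $k$, coordinate $d$, $n\ge1$ and $a>0$, the mean $\bar Z$ of $n$ i.i.d. copies of the $d$-th marginal of $\mathcal{G}_k$ satisfies $\Pr(|\bar Z-E\bar Z|\ge a)\le2e^{-c_0a^2n}$. Quadratic loss: $\mathrm{Loss}_q(x_a,\ldots,x_b)=\sum_{n=a}^b|x_n-\bar x|^2$, $\bar x$ the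 sample mean. Algorithm 2 (inputs $M_{\max}\ge1$, penalty $f(N)>0$, minimal segment size $\beta(N)$): for $k=0,1,\ldots,M_{\max}$ compute $\hat e_k=\min\sum_{j=1}^{k+1}\mathrm{Loss}_q(x_{\ell_{j-1}+1},\ldots,x_{\ell_j})$ over $0=\ell_0<\ell_1<\cdots<\ell_{k+1}=N$ with a minimizer; if its smallest segment has size $<\beta(N)$, set $M=k-1$ and stop (else $M=M_{\max}$). Output $\hat M=\arg\min_{0\le k\le M}(\hat e_k+kf(N))$ and the change points $\hat\ell_1<\cdots<\hat\ell_{\hat M}$ of the minimizer for $k=\hat M$. The detected segments are the blocks $\{X_n:n=\hat\ell_{j-1}+1,\ldots,\hat\ell_j\}$, $j=1,\ldots,\hat M+1$ ($\hat\ell_0=0,\hat\ell_{\hat M+1}=N$); two detected segments are consecutive if they are neighbors. $\limsup_N E_N$ is the event that $E_N$ occurs for infinitely many $N$. *)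

From HB Require Import structures.
From mathcomp Require Import all_boot all_order all_algebra.
From mathcomp Require Import all_classical all_reals all_analysis.
Set Implicit Arguments. Unset Strict Implicit. Unset Printing Implicit Defensive.
Import Order.TTheory GRing.Theory Num.Theory.
Local Open Scope classical_set_scope.
Local Open Scope ring_scope.

(* Data: x : nat -> 'I_D -> R, where x n d is the d-th coordinate of   *)
(* the n-th observation x_n in R^D (observations indexed 1..N).         *)
Section Algorithm.
Variables (R : realType) (D : nat).

Definition seg_mean (x : nat -> 'I_D -> R) (a b : nat) (d : 'I_D) : R :=
  (\sum_(a <= n < b) x n.+1 d) / (b - a)%:R.

Definition loss_q (x : nat -> 'I_D -> R) (a b : nat) : R :=
  \sum_(a <= n < b) \sum_(d < D) (x n.+1 d - seg_mean x a b d) ^+ 2.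

(* a segmentation with k change points l_1 < ... < l_k of {1..N} is
   a seq s = [:: l_1; ...; l_k] with 0 < l_1 < ... < l_k < N.
   Its full boundary list is 0 = l_0, l_1, ..., l_k, l_{k+1} = N. *)
Definition boundaries (N : nat) (s : seq nat) : seq nat := 0%N :: rcons s N.

Definition valid_seg (N : nat) (s : seq nat) : bool := path ltn 0%N (rcons s N).

Definition seg_pairs (N : nat) (s : seq nat) : seq (nat * nat) :=
  zip (0%N :: s) (rcons s N).

Definition seg_cost (x : nat -> 'I_D -> R) (N : nat) (s : seq nat) : R :=
  \sum_(p <- seg_pairs N s) loss_q x p.1 p.2.

Definition min_seg_size (N : nat) (s : seq nat) : nat :=
  foldr minn N [seq (p.2 - p.1)%N | p <- seg_pairs N s].

(* A tie-breaking rule for the minimisation step: for every sample size N,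
   data x and number k < N of change points, [sel N x k] is a minimiser of
   the total loss among all segmentations with k change points. *)
Definition partition_selector
    (sel : nat -> (nat -> 'I_D -> R) -> nat -> seq nat) : Prop :=
  forall N x k, (k < N)%N ->
    [/\ valid_seg N (sel N x k), size (sel N x k) = k &
        forall s, valid_seg N s -> size s = k ->
          seg_cost x N (sel N x k) <= seg_cost x N s].

(* A tie-breaking rule for the arg min step: for any nonempty list of reals,
   [am v] is an index of a minimal entry. *)
Definition argmin_selector (am : seq R -> nat) : Prop :=
  forall v : seq R, v != [::] ->
    (am v < size v)%N /\ forall i, (i < size v)%N -> v`_(am v) <= v`_i.

(* Algorithm 2, with inputs Mmax, penalty fN = f(N), minimal segment
   size betaN = beta(N), and tie-breaking rules sel and am.
   Step k fails (and the loop stops with M = k - 1) if the minimiser has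
   a segment of size < betaN; we also stop if no segmentation with k
   change points exists (k >= N). *)
Definition alg2_M (sel : nat -> (nat -> 'I_D -> R) -> nat -> seq nat)
    (Mmax : nat) (betaN : nat) (N : nat) (x : nat -> 'I_D -> R) : nat :=
  let bad k := (N <= k)%N || (min_seg_size N (sel N x k) < betaN)%N in
  (find bad (iota 0 Mmax.+1)).-1.

Definition alg2_Mhat (sel : nat -> (nat -> 'I_D -> R) -> nat -> seq nat)
    (am : seq R -> nat) (Mmax : nat) (fN : R) (betaN : nat) (N : nat)
    (x : nat -> 'I_D -> R) : nat :=
  am [seq seg_cost x N (sel N x k) + k%:R * fN
     | k <- iota 0 (alg2_M sel Mmax betaN N x).+1].

Definition alg2_cps (sel : nat -> (nat -> 'I_D -> R) -> nat -> seq nat)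
    (am : seq R -> nat) (Mmax : nat) (fN : R) (betaN : nat) (N : nat)
    (x : nat -> 'I_D -> R) : seq nat :=
  sel N x (alg2_Mhat sel am Mmax fN betaN N x).

Definition consecutive_detected (cps : seq nat) (N a b c : nat) : Prop :=
  exists j, [/\ (j.+2 < size (boundaries N cps))%N,
    nth 0%N (boundaries N cps) j = a,
    nth 0%N (boundaries N cps) j.+1 = b &
    nth 0%N (boundaries N cps) j.+2 = c].

End Algorithm.

Section Prob.
Variables (d : measure_display) (T : measurableType d) (R : realType) (D : nat).

Definition vec_event (Y : 'I_D -> T -> R) (B : 'I_D -> set R) : set T :=
  [set w | forall i, B i (Y i w)].

(* Mutual independence of the random vectors Y_n (n in S), checked on the
   generating pi-systems {Y_n in B_1 x ... x B_D} of the sigma-algebras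
   sigma(Y_n): product rule over every finite subfamily. *)
Definition mutually_independent_vectors (P : probability T R)
    (Y : nat -> 'I_D -> T -> R) (S : nat -> Prop) : Prop :=
  forall (s : seq nat) (B : nat -> 'I_D -> set R),
    uniq s -> (forall n, n \in s -> S n) ->
    (forall n i, measurable (B n i)) ->
    fine (P (\bigcap_(n in [set n | n \in s]) vec_event (Y n) (B n)))
    = \prod_(n <- s) fine (P (vec_event (Y n) (B n))).

(* the random vectors Y and Y' have the same distribution (on rectangles,
   a pi-system generating the Borel sets of R^D) *)
Definition same_law_vectors (P : probability T R) (Y Y' : 'I_D -> T -> R) : Prop :=
  forall B : 'I_D -> set R, (forall i, measurable (B i)) ->
    P (vec_event Y B) = P (vec_event Y' B).

Definition limsup_event (E : nat -> set T) : set T :=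
  [set w | forall m, exists2 N, (m <= N)%N & E N w].

End Prob.

From HB Require Import structures.
From mathcomp Require Import all_boot all_order all_algebra.
From mathcomp Require Import all_classical all_reals all_analysis.
From mathcomp Require Import measurable_realfun measurable_fun_approximation.
From mathcomp Require Import lra ring zify.
Import Order.TTheory GRing.Theory Num.Theory.
Local Open Scope classical_set_scope.
Local Open Scope ring_scope.

(* If (a, b] and (b, c] are consecutive detected segments, merging them yields a
   segmentation with one change point fewer; since the selected number of change
   points minimises penalised cost, f(N) <= Loss(a, c] - Loss(a, b] - Loss(b, c].
   Inside a true segment with mean mu this gain is at most the sum, over both halves
   and all D coordinates, of (length) * (block mean - mu)^2.  Hence, when
   f(N) >= C log N, some coordinate of some block inside the segment has
   (length) * (mean - mu)^2 >= tau := C log N / (2 D).  By (A.4) each such block has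
   probability at most 2 exp(-c0 tau) <= 2 N^-8 (this is where c0 C > 16 D is used),
   and a union bound over the (N + 1)^2 D candidates gives a summable bound
   O(D / (N (N + 1))).  Borel-Cantelli concludes. *)

Section Segmentation.
Context {R : realType} {D : nat}.
Implicit Types (x : nat -> 'I_D -> R) (s : seq nat).

Fixpoint path_cost (g : nat -> nat -> R) (h : nat) (l : seq nat) : R :=
  if l is y :: l' then g h y + path_cost g y l' else 0.

Lemma path_cost_cat g h p l :
  path_cost g h (p ++ l) = path_cost g h p + path_cost g (last h p) l.
Proof. by elim: p h => [|y p IH] h /=; rewrite ?add0r // IH addrA. Qed.

Lemma seg_costE x N s : seg_cost x N s = path_cost (loss_q x) 0 (rcons s N).
Proof.
rewrite /seg_cost /seg_pairs; elim: s 0%N => [|y s IH] h /=.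
  by rewrite big_cons big_nil /= !addr0.
by rewrite big_cons /= IH.
Qed.

Lemma nth_cons_cat_size (h : nat) p r : nth 0%N (h :: p ++ r) (size p) = last h p.
Proof. by elim: p h => [|y p IH] h //=. Qed.

Lemma merge_consecutive_segments x N s a b c :
  valid_seg N s -> consecutive_detected s N a b c ->
  exists s', [/\ valid_seg N s', (size s').+1 = size s &
    seg_cost x N s = seg_cost x N s' + (loss_q x a b + loss_q x b c - loss_q x a c)].
Proof.
move=> Vs [j [+ + + +]]; rewrite /boundaries /= size_rcons !ltnS => js.
have sE : s = take j s ++ nth 0%N s j :: drop j.+1 s.
  by rewrite -drop_nth // cat_take_drop.
set p := take j s in sE *; set q := drop j.+1 s in sE *.
set bj := nth 0%N s j in sE *.
have sp : size p = j by rewrite size_take js.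
rewrite sE rcons_cat rcons_cons -!sp nth_cons_cat_size => Ea.
rewrite nth_cat ltnn subnn /= => Eb.
rewrite nth_cat ltnNge leqnSn /= subSn // subnn /= => Ec.
have qE : rcons q N = c :: behead (rcons q N) by rewrite -Ec; case: (q).
exists (p ++ q); split.
- move: Vs; rewrite /valid_seg sE !rcons_cat !cat_path rcons_cons Ea qE Eb /=.
  by case/andP=> -> /and3P[ab bc ->]; rewrite (ltn_trans ab bc).
- by rewrite !size_cat addnS.
- rewrite !seg_costE !rcons_cat rcons_cons !path_cost_cat Ea qE Eb /=; lra.
Qed.

Section Algorithm2.
Variables (sel : nat -> (nat -> 'I_D -> R) -> nat -> seq nat) (am : seq R -> nat).
Variables (Mmax : nat) (fN : R) (betaN N : nat) (x : nat -> 'I_D -> R).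

Let M := alg2_M sel Mmax betaN N x.
Let Mhat := alg2_Mhat sel am Mmax fN betaN N x.

Lemma alg2_M_lt k : (0 < N)%N -> (k <= M)%N -> (k < N)%N.
Proof.
move=> N0; rewrite /M /alg2_M; set bad := (fun k => _).
have := find_size bad (iota 0 Mmax.+1); rewrite size_iota.
case E: (find _ _) => [|i] /=; first by move=> _; rewrite leqn0 => /eqP ->.
move=> iM ki; have : (k < find bad (iota 0 Mmax.+1))%N by rewrite E ltnS.
move/(before_find 0%N); rewrite nth_iota; last exact: leq_ltn_trans iM.
by rewrite add0n /bad => /negbT; rewrite negb_or -ltnNge => /andP[].
Qed.

Hypothesis am_min : argmin_selector am.

Let costs := [seq seg_cost x N (sel N x k) + k%:R * fN | k <- iota 0 M.+1].

Let costs_neq0 : costs != [::].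
Proof. by rewrite -size_eq0 size_map size_iota. Qed.

Lemma alg2_Mhat_le : (Mhat <= M)%N.
Proof. by have [] := am_min costs costs_neq0; rewrite size_map size_iota ltnS. Qed.

Lemma alg2_Mhat_min k : (k <= M)%N ->
  seg_cost x N (alg2_cps sel am Mmax fN betaN N x) + Mhat%:R * fN
  <= seg_cost x N (sel N x k) + k%:R * fN.
Proof.
move=> kM; have [_ /(_ k)] := am_min costs costs_neq0.
rewrite size_map size_iota ltnS => /(_ kM).
have MhatM := alg2_Mhat_le.
by rewrite !(nth_map 0%N) ?size_iota ?ltnS // !nth_iota ?ltnS.
Qed.

End Algorithm2.

Lemma alg2_penalty_le_merge_gain sel am Mmax fN betaN N x a b c :
  partition_selector sel -> argmin_selector am -> (0 < N)%N ->
  consecutive_detected (alg2_cps sel am Mmax fN betaN N x) N a b c ->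
  fN <= loss_q x a c - loss_q x a b - loss_q x b c.
Proof.
move=> sel_opt am_min N0 abc.
have MhatM := alg2_Mhat_le sel am Mmax fN betaN N x am_min.
set Mhat := alg2_Mhat sel am Mmax fN betaN N x in MhatM.
have [Vcps Scps _] := sel_opt N x Mhat (alg2_M_lt _ _ _ _ _ _ N0 MhatM).
have [s' [Vs' Ss' costE]] := merge_consecutive_segments x _ _ _ _ _ Vcps abc.
have s'M : (size s' <= alg2_M sel Mmax betaN N x)%N.
  by apply: leq_trans MhatM; rewrite -Scps -Ss'.
have [_ _ /(_ s' Vs' erefl) opt'] := sel_opt N x (size s') (alg2_M_lt _ _ _ _ _ _ N0 s'M).
have := alg2_Mhat_min sel am Mmax fN betaN N x am_min _ s'M.
rewrite /alg2_cps -/Mhat costE -Scps -Ss' -natr1; lra.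
Qed.

End Segmentation.

Section MeanBias.
Context {R : realType} {D : nat}.
Implicit Types (x : nat -> 'I_D -> R) (m : 'I_D -> R).

Lemma sum_sqr_dev_split (y : nat -> R) a b (m : R) : (a < b)%N ->
  let ybar := (\sum_(a <= i < b) y i) / (b - a)%:R in
  \sum_(a <= n < b) (y n - m) ^+ 2 =
  \sum_(a <= n < b) (y n - ybar) ^+ 2 + (b - a)%:R * (ybar - m) ^+ 2.
Proof.
move=> ab ybar.
have sumE : \sum_(a <= i < b) y i = ybar * (b - a)%:R.
  by rewrite mulfVK // pnatr_eq0 subn_eq0 -ltnNge.
have termE n : (y n - m) ^+ 2 =
    (y n - ybar) ^+ 2 + 2 * (ybar - m) * y n + ((ybar - m) ^+ 2 - 2 * (ybar - m) * ybar).
  by ring.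
rewrite (eq_bigr _ (fun n _ => termE n)) !big_split /= -mulr_sumr sumE !sumr_const_nat.
clearbody ybar; move: (b - a)%N => k; ring.
Qed.

Definition mean_bias x m (a b : nat) : R :=
  \sum_(d < D) (b - a)%:R * (seg_mean x a b d - m d) ^+ 2.

Lemma mean_bias_ge0 x m a b : 0 <= mean_bias x m a b.
Proof. by apply: sumr_ge0 => d _; rewrite mulr_ge0 ?sqr_ge0. Qed.

Lemma sum_sqr_dev_loss_q x m a b : (a < b)%N ->
  \sum_(a <= n < b) \sum_(d < D) (x n.+1 d - m d) ^+ 2 =
  loss_q x a b + mean_bias x m a b.
Proof.
move=> ab; rewrite /loss_q exchange_big [X in _ = X + _]exchange_big -big_split.
by apply: eq_bigr => d _; rewrite /seg_mean sum_sqr_dev_split.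
Qed.

(* [loss_q x a c] is the least squared deviation of [(a, c]] from a common centre:
   take the centre [m] and split the sum at [b]. *)
Lemma merge_gain_le_mean_bias x m a b c : (a < b)%N -> (b < c)%N ->
  loss_q x a c - loss_q x a b - loss_q x b c <= mean_bias x m a b + mean_bias x m b c.
Proof.
move=> ab bc.
have := sum_sqr_dev_loss_q x m a c (ltn_trans ab bc).
rewrite (big_cat_nat (ltnW ab) (ltnW bc)) /= !sum_sqr_dev_loss_q //.
by have := mean_bias_ge0 x m a c; lra.
Qed.

End MeanBias.

Lemma exists_ge_of_sum_ge {R : realFieldType} {D : nat} {g : 'I_D -> R} {t : R} :
  (0 < D)%N -> D%:R * t <= \sum_(d < D) g d -> exists d, t <= g d.
Proof.
move=> D0 tg; apply: contrapT => /forallNP gt.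
have : \sum_(d < D) g d < \sum_(d < D) t.
  apply: ltr_sum => [|d _]; first by apply/hasP; exists (Ordinal D0); rewrite ?mem_index_enum.
  by rewrite ltNge; apply/negP.
by rewrite sumr_const card_ord -mulr_natl ltNge tg.
Qed.

Lemma change_points_segment (L : nat -> nat) (M k : nat) :
  (forall j, (j <= M)%N -> (L j < L j.+1)%N) -> (1 <= k <= M.+1)%N ->
  (L k.-1 < L k <= L M.+1)%N.
Proof.
move=> Lincr /andP[k1 kM]; apply/andP; split.
  by rewrite -[in L k](prednK k1) Lincr // -ltnS prednK.
apply: (@homo_leq_in _ [pred j | (j <= M.+1)%N] L leq) => //.
- exact: leq_trans.
- by move=> i j _ jM l /andP[_ /ltnW lj]; exact: leq_trans lj jM.
- by move=> i _ iM; exact/ltnW/Lincr.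
- exact: leqnn.
Qed.

Section Pronic.
Context {R : realType}.

(* At [n = 0] the inverse is the junk value [0^-1 = 0]. *)
Definition inv_pronic (n : nat) : R := (n%:R * n.+1%:R)^-1.

Lemma inv_pronic_ge0 n : 0 <= inv_pronic n.
Proof. by rewrite invr_ge0 mulr_ge0. Qed.

Lemma sum_inv_pronic n : \sum_(0 <= i < n.+1) inv_pronic i = 1 - n.+1%:R^-1.
Proof.
elim: n => [|n IH]; first by rewrite big_nat1 /inv_pronic mul0r invr0 invr1 subrr.
rewrite big_nat_recr //= IH /inv_pronic.
have n1 : n.+1%:R != 0 :> R by rewrite pnatr_eq0.
have n2 : n.+2%:R != 0 :> R by rewrite pnatr_eq0.
rewrite -[n.+2%:R]natr1 -[n.+1%:R]natr1 in n1 n2 *.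
by field; rewrite n1 n2.
Qed.

Lemma nneseries_lt_pronic (u : nat -> \bar R) (K : R) : 0 <= K ->
  (forall n, (0 <= u n)%E) -> (forall n, (u n <= (K * inv_pronic n)%:E)%E) ->
  (\sum_(n <oo) u n < +oo)%E.
Proof.
move=> K0 u0 uK; apply: le_lt_trans (ltry K).
apply: le_trans (lee_nneseries (fun n _ _ => u0 n) (fun n _ => uK n)) _.
apply: lime_le.
  by apply: is_cvg_nneseries => n _ _; rewrite lee_fin mulr_ge0 ?inv_pronic_ge0.
apply: nearW => -[|n]; rewrite sumEFin lee_fin -mulr_sumr; first by rewrite big_geq // mulr0.
by rewrite sum_inv_pronic ler_piMr // lerBlDr lerDl invr_ge0.
Qed.

Lemma expRN_le_inv_exp (N k : nat) (y : R) : (0 < N)%N ->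
  k%:R * ln N%:R <= y -> expR (- y) <= (N%:R ^+ k)^-1.
Proof.
move=> N0 ky.
have -> : (N%:R ^+ k)^-1 = expR (- (k%:R * ln N%:R)) :> R.
  by rewrite expRN expRM_natl lnK // posrE ltr0n.
by rewrite ler_expR lerN2.
Qed.

Lemma union_bound_le_pronic (N : nat) (D y : R) : (0 < N)%N -> 0 <= D ->
  8%:R * ln N%:R <= y -> N.+1%:R ^+ 2 * D * (2 * expR (- y)) <= 16 * D * inv_pronic N.
Proof.
move=> N0 D0 /(expRN_le_inv_exp _ _ _ N0) ey.
have Np : 0 < N%:R :> R by rewrite ltr0n.
have cube : N.+1%:R ^+ 3 <= 8 * N%:R ^+ 7 :> R.
  rewrite -!natrX -natrM ler_nat.
  apply: (@leq_trans ((2 * N) ^ 3)); first by rewrite leq_exp2r //; lia.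
  by rewrite expnMn leq_mul2l leq_pexp2l.
apply: le_trans (_ : N.+1%:R ^+ 2 * D * (2 * (N%:R ^+ 8)^-1) <= _).
  by rewrite ler_wpM2l ?mulr_ge0 // ler_wpM2l.
rewrite /inv_pronic mulrA ler_pdivlMr ?mulr_gt0 // mulrAC ler_pdivrMr ?exprn_gt0 //.
have -> : N.+1%:R ^+ 2 * D * 2 * (N%:R * N.+1%:R) = 2 * D * (N%:R * N.+1%:R ^+ 3) :> R.
  by ring.
have -> : 16 * D * N%:R ^+ 8 = 2 * D * (N%:R * (8 * N%:R ^+ 7)) :> R by ring.
by rewrite ler_wpM2l ?mulr_ge0 // ler_wpM2l // ltW.
Qed.

Lemma penalty_exponent_ge (c0 C : R) (D N : nat) :
  0 < c0 -> (0 < D)%N -> 16 * D%:R / c0 < C -> (0 < N)%N ->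
  8%:R * ln N%:R <= c0 * (C * ln N%:R / (2 * D%:R)).
Proof.
move=> c0_gt0 D0 + N0; rewrite ltr_pdivrMr // => Cc0.
have D_gt0 : 0 < D%:R :> R by rewrite ltr0n.
have lnN : 0 <= ln N%:R :> R by rewrite ln_ge0 // ler1n.
by rewrite mulrA ler_pdivlMr ?mulr_gt0 //; nra.
Qed.

End Pronic.

Lemma measure_bigsetU_le d (T : measurableType d) (R : realType)
    (mu : {measure set T -> \bar R}) (I : Type) (r : seq I) (p : pred I) (F : I -> set T) :
  (forall i, p i -> measurable (F i)) ->
  (mu (\big[setU/set0]_(i <- r | p i) F i) <= \sum_(i <- r | p i) mu (F i))%E.
Proof.
move=> mF; elim: r => [|i r IH]; first by rewrite !big_nil measure0.
rewrite !big_cons; case: ifP => // pi.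
apply: le_trans (measureU2 mu (mF i pi) (bigsetU_measurable _ mF)) _.
exact: leeD2l.
Qed.

Section BiasEvents.
Context {d : measure_display} {T : measurableType d} {R : realType} {D : nat}.
Variable P : probability T R.
Variables (X : nat -> 'I_D -> T -> R) (m : 'I_D -> R) (tau : R).
Hypothesis mX : forall n i, measurable_fun setT (X n i).

Definition bias_event (a b : nat) (i : 'I_D) : set T :=
  [set w | tau <= (b - a)%:R * (seg_mean (fun n j => X n j w) a b i - m i) ^+ 2].

Lemma measurable_bias_event a b i : measurable (bias_event a b i).
Proof.
rewrite -[bias_event _ _ _]setTI; apply: measurable_fun_le => //.
rewrite /seg_mean; apply: measurable_funM; first exact: measurable_cst.
apply: measurable_funX; apply: measurable_funB; last exact: measurable_cst.
apply: measurable_funM; last exact: measurable_cst.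
by apply: measurable_sum => n; exact: mX.
Qed.

Definition bias_union (lo hi N : nat) : set T :=
  \big[setU/set0]_(t : 'I_N.+1 * 'I_N.+1 * 'I_D | (lo <= t.1.1 < t.1.2)%N && (t.1.2 <= hi)%N)
    bias_event t.1.1 t.1.2 t.2.

Lemma measurable_bias_union lo hi N : measurable (bias_union lo hi N).
Proof. by apply: bigsetU_measurable => t _; exact: measurable_bias_event. Qed.

Lemma bias_event_sub_union lo hi N a b i : (lo <= a < b)%N -> (b <= hi <= N)%N ->
  bias_event a b i `<=` bias_union lo hi N.
Proof.
move=> /andP[la ab] /andP[bh hN] w abw.
have aN : (a < N.+1)%N by lia.
have bN : (b < N.+1)%N by lia.
by rewrite /bias_union (bigD1 (Ordinal aN, Ordinal bN, i)) /= ?la ?ab ?bh //; left.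
Qed.

Lemma bias_union_le lo hi N (e : R) : 0 <= e ->
  (forall a b i, (lo <= a < b)%N -> (b <= hi)%N -> (P (bias_event a b i) <= e%:E)%E) ->
  (P (bias_union lo hi N) <= (N.+1%:R ^+ 2 * D%:R * e)%:E)%E.
Proof.
move=> e0 Pe.
apply: le_trans; first by apply: measure_bigsetU_le => t _; exact: measurable_bias_event.
apply: (@le_trans _ _ (\sum_(t : 'I_N.+1 * 'I_N.+1 * 'I_D) e%:E)%E).
  rewrite big_mkcond /=; apply: lee_sum => t _.
  by case: ifP => [/andP[lab bh]|_]; [exact: Pe | rewrite lee_fin].
by rewrite sumEFin sumr_const !card_prod !card_ord -[e *+ _]mulr_natr !natrM expr2 mulrC.
Qed.

Lemma bias_event_le_subgauss (c0 : R) (lo hi : nat) (i : 'I_D) :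
  (forall (s : seq nat) (r : R), uniq s -> s != [::] ->
     (forall n, n \in s -> (lo < n <= hi)%N) -> 0 < r ->
     (P [set w | (r <= `|(\sum_(n <- s) X n i w) / (size s)%:R - m i|)%R]
      <= (2 * expR (- (c0 * r ^+ 2 * (size s)%:R)))%:E)%E) ->
  0 < tau -> forall a b, (lo <= a)%N -> (a < b <= hi)%N ->
  (P (bias_event a b i) <= (2 * expR (- (c0 * tau)))%:E)%E.
Proof.
move=> subG tau0 a b la /andP[ab bh].
have ba0 : 0 < (b - a)%:R :> R by rewrite ltr0n subn_gt0.
set s := iota a.+1 (b - a).
have s_neq0 : s != [::] by rewrite -size_eq0 size_iota subn_eq0 -ltnNge.
have s_in n : n \in s -> (lo < n <= hi)%N by rewrite mem_iota; lia.
have r_gt0 : 0 < Num.sqrt (tau / (b - a)%:R) by rewrite sqrtr_gt0 divr_gt0.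
have := subG s _ (iota_uniq _ _) s_neq0 s_in r_gt0.
have ratio_ge0 : 0 <= tau / (b - a)%:R by rewrite divr_ge0 // ltW.
rewrite size_iota sqr_sqrtr // -mulrA divfK ?gt_eqF //.
apply: le_trans; apply: le_measure; rewrite ?inE.
- exact: measurable_bias_event.
- rewrite -[X in measurable X]setTI; apply: measurable_fun_le => //.
  apply: measurableT_comp; first exact: normr_measurable.
  apply: measurable_funB; last exact: measurable_cst.
  apply: measurable_funM; last exact: measurable_cst.
  by apply: measurable_sum => n; exact: mX.
- move=> w; rewrite /bias_event /seg_mean /=.
  have -> : \sum_(n <- s) X n i w = \sum_(a <= n < b) X n.+1 i w.
    by rewrite /s -[a.+1]add1n iotaDl big_map.
  by rewrite -sqrtr_sqr ler_sqrt ?sqr_ge0 // ler_pdivrMr // mulrC.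
Qed.

Lemma bias_union_le_pronic (c0 : R) (lo hi N : nat) :
  (forall i (s : seq nat) (r : R), uniq s -> s != [::] ->
     (forall n, n \in s -> (lo < n <= hi)%N) -> 0 < r ->
     (P [set w | (r <= `|(\sum_(n <- s) X n i w) / (size s)%:R - m i|)%R]
      <= (2 * expR (- (c0 * r ^+ 2 * (size s)%:R)))%:E)%E) ->
  0 < tau -> (0 < N)%N -> 8%:R * ln N%:R <= c0 * tau ->
  (P (bias_union lo hi N) <= (16 * D%:R * inv_pronic N)%:E)%E.
Proof.
move=> subG tau_gt0 N0 rate.
have e0 : 0 <= 2 * expR (- (c0 * tau)) by rewrite mulr_ge0 // expR_ge0.
apply: le_trans (bias_union_le lo hi N _ e0 _) _.
- move=> a b i /andP[la ab] bh.
  by apply: (bias_event_le_subgauss c0 lo hi i (subG i) tau_gt0); rewrite ?ab.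
- by rewrite lee_fin union_bound_le_pronic.
Qed.

End BiasEvents.

Lemma consecutive_detected_sub_bias_union {d : measure_display} {T : measurableType d}
    {R : realType} {D : nat} (X : nat -> 'I_D -> T -> R) (m : 'I_D -> R) (tau : R)
    sel am Mmax fN betaN N lo hi n1 n2 n3 :
  partition_selector sel -> argmin_selector am -> (0 < D)%N -> (0 < N)%N ->
  2 * D%:R * tau <= fN -> (n1 < n2 < n3)%N -> (n3 <= hi - lo)%N -> (hi <= N)%N ->
  [set w | consecutive_detected (alg2_cps sel am Mmax fN betaN N (fun n i => X n i w))
             N (lo + n1) (lo + n2) (lo + n3)]
  `<=` bias_union X m tau lo hi N.
Proof.
move=> sel_opt am_min D0 N0 tau_f /andP[n12 n23] n3_le hN w /= abc.
set x := fun n i => X n i w in abc.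
have ab : (lo + n1 < lo + n2)%N by rewrite ltn_add2l.
have bc : (lo + n2 < lo + n3)%N by rewrite ltn_add2l.
have gain := alg2_penalty_le_merge_gain _ _ _ _ _ _ _ _ _ _ sel_opt am_min N0 abc.
have bias := merge_gain_le_mean_bias x m _ _ _ ab bc.
have [tab|tab] := lerP (D%:R * tau) (mean_bias x m (lo + n1) (lo + n2)).
  have [i ?] := exists_ge_of_sum_ge D0 tab.
  by apply: (bias_event_sub_union _ _ _ _ _ _ (lo + n1) (lo + n2) i) => //; apply/andP; split; lia.
have tbc : D%:R * tau <= mean_bias x m (lo + n2) (lo + n3) by lra.
have [i ?] := exists_ge_of_sum_ge D0 tbc.
by apply: (bias_event_sub_union _ _ _ _ _ _ (lo + n2) (lo + n3) i) => //; apply/andP; split; lia.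
Qed.

Theorem lemma4 (R : realType) (dT : measure_display) (T : measurableType dT)
    (P : probability T R) (D M0 : nat)
    (X : nat -> nat -> 'I_D -> T -> R) (L : nat -> nat -> nat)
    (mu : nat -> 'I_D -> R) (c0 : R)
    (Mmax : nat) (f : nat -> R) (beta : nat -> nat) (C : R)
    (sel : nat -> (nat -> 'I_D -> R) -> nat -> seq nat) (am : seq R -> nat)
    (k : nat) :
  (0 < D)%N ->
  (* (M.2): change points 0 = L_0 < L_1 < ... < L_{M0+1} = N *)
  (forall N, (M0 < N)%N ->
     [/\ L N 0%N = 0%N, L N M0.+1 = N &
         forall j, (j <= M0)%N -> (L N j < L N j.+1)%N]) ->
  (* segment sizes N_j -> oo *)
  (forall j, (1 <= j <= M0.+1)%N -> forall B : nat,
     exists N0, forall N, (N0 <= N)%N -> (B <= L N j - L N j.-1)%N) ->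
  (* X N n i = i-th coordinate of X_n in the sample of size N *)
  (forall N n i, measurable_fun setT (X N n i)) ->
  (* independence of X_1, ..., X_N *)
  (forall N, (M0 < N)%N ->
     mutually_independent_vectors P (X N) [set n | (1 <= n <= N)%N]) ->
  (* within segment j the X_n have a common distribution G_j (independent of N) *)
  (forall j N N' n n', (M0 < N)%N -> (M0 < N')%N -> (1 <= j <= M0.+1)%N ->
     (L N j.-1 < n <= L N j)%N -> (L N' j.-1 < n' <= L N' j)%N ->
     same_law_vectors P (X N n) (X N' n')) ->
  (* G_j has mean mu_j and finite covariance *)
  (forall j N n i, (M0 < N)%N -> (1 <= j <= M0.+1)%N ->
     (L N j.-1 < n <= L N j)%N ->
     [/\ P.-integrable setT (EFin \o X N n i),
         P.-integrable setT (EFin \o (fun w => X N n i w ^+ 2)) &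
         (\int[P]_w (X N n i w)%:E = (mu j i)%:E)%E]) ->
  (forall j, (1 <= j <= M0)%N -> exists i, mu j i != mu j.+1 i) ->
  (* (A.4): sub-Gaussian concentration of means of i.i.d. copies *)
  0 < c0 ->
  (forall j N i (s : seq nat) (a : R), (M0 < N)%N -> (1 <= j <= M0.+1)%N ->
     uniq s -> s != [::] -> (forall n, n \in s -> (L N j.-1 < n <= L N j)%N) ->
     0 < a ->
     (P [set w | (a <= `| (\sum_(n <- s) X N n i w) / (size s)%:R - mu j i |)%R]
      <= (2 * expR (- (c0 * a ^+ 2 * (size s)%:R)))%:E)%E) ->
  (* inputs of Algorithm 2 *)
  (1 <= Mmax)%N ->
  (forall N, 0 < f N) ->
  16 * D%:R / c0 < C ->
  (forall N, C * ln N%:R <= f N) ->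
  partition_selector sel -> argmin_selector am ->
  (1 <= k <= M0.+1)%N ->
  P.-negligible (limsup_event (fun N => [set w |
     exists n1 n2 n3, (n1 < n2 < n3)%N /\ (n3 <= L N k - L N k.-1)%N /\
       consecutive_detected
         (alg2_cps sel am Mmax (f N) (beta N) N (fun n i => X N n i w))
         N (L N k.-1 + n1) (L N k.-1 + n2) (L N k.-1 + n3)])).
Proof.
move=> D0 HL _ mX _ _ _ _ c0_gt0 subG _ _ C_gt f_ge sel_opt am_min k_in.
set E := (X in limsup_event X).
pose N1 := maxn M0.+1 2.
pose tau N : R := C * ln N%:R / (2 * D%:R).
pose G N := if (N1 <= N)%N then bias_union (X N) (mu k) (tau N) (L N k.-1) (L N k) N
            else set0.
have large N : (N1 <= N)%N -> [/\ (M0 < N)%N, (1 < N)%N & (L N k.-1 < L N k <= N)%N].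
  rewrite geq_max => /andP[M0N N2]; have [_ LN Lincr] := HL N M0N.
  by split=> //; rewrite -[X in (_ < _ <= X)%N]LN; exact: change_points_segment.
have tau_gt0 N : (1 < N)%N -> 0 < tau N.
  have C_gt0 : 0 < C by apply: lt_trans C_gt; rewrite !mulr_gt0 ?invr_gt0 ?ltr0n.
  by move=> N2; rewrite !divr_gt0 ?mulr_gt0 ?ln_gt0 ?ltr1n ?ltr0n.
have mG N : measurable (G N).
  by rewrite /G; case: ifP => // _; exact: measurable_bias_union.
have PG N : (P (G N) <= (16 * D%:R * inv_pronic N)%:E)%E.
  rewrite /G; case: ifP => [/large[M0N /[dup] N2 /ltnW N0 _] | _]; last first.
    by rewrite measure0 lee_fin !mulr_ge0 ?inv_pronic_ge0.
  apply: (bias_union_le_pronic _ _ _ _ (mX N) c0 _ _ N _ (tau_gt0 N N2) N0).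
    by move=> i s r; exact: subG.
  exact: penalty_exponent_ge.
have EG N : (N1 <= N)%N -> E N `<=` G N.
  move=> N1N; have [_ /ltnW N0 /andP[_ hi_N]] := large N N1N.
  move=> w [n1 [n2 [n3 [n123 [n3_le cd]]]]]; rewrite /G N1N.
  apply: (consecutive_detected_sub_bias_union _ _ _ _ _ _ _ _ _ _ _ _ _ _
    sel_opt am_min D0 N0 _ n123 n3_le hi_N _ cd).
  by rewrite /tau mulrC divfK ?f_ge // mulf_neq0 ?pnatr_eq0 // -lt0n.
exists (lim_sup_set G); split.
- by apply: bigcapT_measurable => n; exact: bigcup_measurable.
- apply: lim_sup_set_cvg0 => //.
  by apply: (nneseries_lt_pronic _ _ _ (fun N => measure_ge0 P (G N)) PG); rewrite mulr_ge0.
- move=> w Ew n _; have [N] := Ew (maxn n N1); rewrite geq_max => /andP[nN N1N] ENw.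
  by exists N => //; exact: EG.
Qed.
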